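(* There is a partial order $(P,\leq_P)$, with first, second and third levels $P_1,P_2,P_3$, such that: (1) $P$ is locally countable, has size continuum and has height three; (2) $P_1$ has size continuum; (3) every countable subset of $P_1$ has an upper bound in $P_2$; (4) for every finite subset $Q$ of $P_1\cup P_2$ and every $q\in P_2$ not equal to any element of $Q$, there is an element of $P_3$ which is above every element of $Q$ but not above $q$.
   Context: A partial order is locally countable if every element has at most countably many strict predecessors; it has height $n$ if its longest chain has length exactly $n$. For a partial order of height three, the first level consists of elements with no strict predecessors, the second level of elements not in the first level whose strict predecessors all lie in the first level, and the third level of the remaining elements (those not in the first two levels, all of whose strict predecessors lie in the first two levels). *)

From Stdlib Require Import List Sorted.
Import ListNotations.

Section PosetDefs.
Variable (P : Type) (le : P -> P -> Prop).

Definition is_partial_order : Prop :=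
  (forall x, le x x) /\
  (forall x y, le x y -> le y x -> x = y) /\
  (forall x y z, le x y -> le y z -> le x z).

Definition lt (x y : P) : Prop := le x y /\ x <> y.

Definition countable_set {T : Type} (A : T -> Prop) : Prop :=
  exists f : T -> nat, forall a b, A a -> A b -> f a = f b -> a = b.

Definition locally_countable : Prop :=
  forall x, countable_set (fun y => lt y x).

(* A subset A of T has size continuum: it is in bijection with
   the Cantor space nat -> bool (which has cardinality 2^aleph_0). *)
Definition size_continuum {T : Type} (A : T -> Prop) : Prop :=
  exists f : (nat -> bool) -> T,
    (forall s, A (f s)) /\
    (forall s t, f s = f t -> s = t) /\
    (forall a, A a -> exists s, f s = a).

Definition chain_of_length (n : nat) : Prop :=
  exists l : list P, length l = n /\ Sorted lt l.

Definition has_height (n : nat) : Prop :=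
  chain_of_length n /\ ~ chain_of_length (S n).

Definition level1 (x : P) : Prop := forall y, ~ lt y x.
Definition level2 (x : P) : Prop :=
  ~ level1 x /\ forall y, lt y x -> level1 y.
Definition level3 (x : P) : Prop :=
  ~ level1 x /\ ~ level2 x /\ forall y, lt y x -> level1 y \/ level2 y.

End PosetDefs.
Arguments is_partial_order {P} le.
Arguments lt {P} le x y.
Arguments locally_countable {P} le.
Arguments chain_of_length {P} le n.
Arguments has_height {P} le n.
Arguments level1 {P} le x.
Arguments level2 {P} le x.
Arguments level3 {P} le x.

(** Take P to be the Cantor space 2^ω.  The first two bits of a point fix its
    rank 1, 2 or 3; the remaining bits code, via Cantor pairing, a sequence of
    points.  A rank-2 point lies above the points it codes (made rank 1), and a
    rank-3 point above the points of rank at most 2 it codes together with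
    their predecessors; the zeroth coded point of a rank-3 point is made rank 2,
    so every point of rank n > 1 has a predecessor of rank n - 1 and the ranks
    are exactly the levels.  Predecessor sets are countable because they are
    enumerated by the code.  Conversely every countable sequence is coded by
    some point: an upper bound for a countable set of minimal points is a
    rank-2 point coding it, and for (4) a rank-3 point coding the list Q, and
    nothing equal to q, works. *)
From Stdlib Require Import Arith List Sorted Cantor Lia FunctionalExtensionality ClassicalEpsilon.
Import ListNotations.

Lemma countable_set_of_enum {T : Type} (A : T -> Prop) (g : nat -> T) :
  (forall a, A a -> exists n, g n = a) -> countable_set A.
Proof.
  intros Hg. exists (fun a => epsilon (inhabits 0) (fun n => g n = a)).
  intros a b Ha Hb E.
  pose proof (epsilon_spec (inhabits 0) (fun n => g n = a) (Hg a Ha)) as Ea.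
  pose proof (epsilon_spec (inhabits 0) (fun n => g n = b) (Hg b Hb)) as Eb.
  cbv beta in Ea, Eb. rewrite E in Ea. congruence.
Qed.

Lemma enum_of_countable_set {T : Type} (A : T -> Prop) :
  inhabited T -> countable_set A -> exists g : nat -> T, forall a, A a -> exists n, g n = a.
Proof.
  intros inhT [f f_inj].
  exists (fun n => epsilon inhT (fun a => A a /\ f a = n)).
  intros a Ha. exists (f a).
  destruct (epsilon_spec inhT (fun b => A b /\ f b = f a) (ex_intro _ a (conj Ha eq_refl)))
    as [HA Hf].
  exact (f_inj _ _ HA Ha Hf).
Qed.

Lemma Sorted_length_le {T : Type} (R : T -> T -> Prop) (rank : T -> nat) (n : nat) :
  (forall x y, R x y -> rank x < rank y) -> (forall x, 1 <= rank x <= n) ->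
  forall l, Sorted R l -> length l <= n.
Proof.
  intros rank_R rank_bounds.
  assert (Hcons : forall x l, Sorted R (x :: l) -> length (x :: l) <= S n - rank x).
  { intros x l; revert x; induction l as [|y l IHl]; intros x Hs.
    - cbn [length]; pose proof (rank_bounds x); lia.
    - inversion Hs as [|? ? Hs' Hhd]; subst. inversion Hhd as [|? ? Hxy]; subst.
      specialize (IHl y Hs'). pose proof (rank_R x y Hxy).
      cbn [length] in *; lia. }
  intros [|x l] Hs; [simpl; lia|].
  pose proof (Hcons x l Hs); pose proof (rank_bounds x); lia.
Qed.

Section RankedOrder.
Variables (P : Type) (le : P -> P -> Prop) (rank : P -> nat).
Hypothesis rank_lt : forall x y, lt le x y -> rank x < rank y.
Hypothesis rank_bounds : forall x, 1 <= rank x <= 3.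
Hypothesis lt_rank_pred : forall y, 2 <= rank y -> exists x, lt le x y /\ S (rank x) = rank y.

Lemma level1_iff_rank x : level1 le x <-> rank x = 1.
Proof.
  split.
  - intros Hmin. destruct (Nat.eq_dec (rank x) 1) as [|Hne]; [assumption|].
    destruct (lt_rank_pred x) as [y [Hyx _]]; [pose proof (rank_bounds x); lia|].
    destruct (Hmin y Hyx).
  - intros Hx y Hyx. pose proof (rank_lt y x Hyx); pose proof (rank_bounds y); lia.
Qed.

Lemma level2_iff_rank x : level2 le x <-> rank x = 2.
Proof.
  unfold level2; rewrite level1_iff_rank. split.
  - intros [Hx Hpred]. destruct (Nat.eq_dec (rank x) 3) as [H3|]; [|pose proof (rank_bounds x); lia].
    destruct (lt_rank_pred x) as [y [Hyx Hy]]; [lia|].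
    apply Hpred, level1_iff_rank in Hyx. lia.
  - intros Hx. split; [lia|].
    intros y Hyx. apply level1_iff_rank.
    pose proof (rank_lt y x Hyx); pose proof (rank_bounds y); lia.
Qed.

Lemma level3_iff_rank x : level3 le x <-> rank x = 3.
Proof.
  unfold level3; rewrite level1_iff_rank, level2_iff_rank. split.
  - intros [H1 [H2 _]]. pose proof (rank_bounds x); lia.
  - intros Hx. repeat split; try lia.
    intros y Hyx. rewrite level1_iff_rank, level2_iff_rank.
    pose proof (rank_lt y x Hyx); pose proof (rank_bounds y); lia.
Qed.

Lemma has_height_3 : (exists z, rank z = 3) -> has_height le 3.
Proof.
  intros [z Hz]. split.
  - destruct (lt_rank_pred z) as [y [Hyz Hy]]; [lia|].
    destruct (lt_rank_pred y) as [x [Hxy _]]; [lia|].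
    exists [x; y; z]. split; [reflexivity|].
    apply Sorted_cons; [apply Sorted_cons; [apply Sorted_cons|]|].
    + apply Sorted_nil.
    + apply HdRel_nil.
    + now apply HdRel_cons.
    + now apply HdRel_cons.
  - intros [l [Hl Hs]].
    pose proof (Sorted_length_le (lt le) rank 3 rank_lt rank_bounds l Hs). lia.
Qed.

End RankedOrder.

Definition code := nat -> bool.

Definition code_rank (x : code) : nat := if x 0 then (if x 1 then 3 else 2) else 1.

Definition with_rank1 (s : code) : code := fun n => match n with 0 => false | _ => s n end.
Definition with_rank2 (s : code) : code :=
  fun n => match n with 0 => true | 1 => false | _ => s n end.

Definition part (z : code) (i : nat) : code := fun n => z (2 + to_nat (i, n)).
Definition pack (b0 b1 : bool) (g : nat -> code) : code :=
  fun m => match m with 0 => b0 | 1 => b1 | S (S m) => let (i, n) := of_nat m in g i n end.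

Definition below1 (z : code) (i : nat) : code := with_rank1 (part z i).
Definition below2 (z : code) (i : nat) : code :=
  match i with 0 => with_rank2 (part z 0) | _ => part z i end.

(* May also list points of rank >= [code_rank y] (e.g. a coded point of rank 3);
   [coded_lt] discards them by rank. *)
Definition pred_enum (y : code) (k : nat) : code :=
  match code_rank y with
  | 3 => let (i, j) := of_nat k in
         match j with 0 => below2 y i | S j => below1 (below2 y i) j end
  | _ => below1 y k
  end.

Definition coded_lt (x y : code) : Prop :=
  code_rank x < code_rank y /\ exists k, pred_enum y k = x.

Definition coded_le (x y : code) : Prop := x = y \/ coded_lt x y.

Lemma code_rank_bounds x : 1 <= code_rank x <= 3.
Proof. unfold code_rank; destruct (x 0), (x 1); lia. Qed.

Lemma part_pack b0 b1 g i : part (pack b0 b1 g) i = g i.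
Proof.
  apply functional_extensionality; intro n.
  unfold part, pack. change (2 + to_nat (i, n)) with (S (S (to_nat (i, n)))).
  cbv beta iota. now rewrite cancel_of_to.
Qed.

Lemma with_rank1_id x : code_rank x = 1 -> with_rank1 x = x.
Proof.
  unfold code_rank; intros Hx.
  apply functional_extensionality; intros [|n]; [|reflexivity].
  simpl; destruct (x 0), (x 1); congruence.
Qed.

Lemma coded_lt_trans x y z : coded_lt x y -> coded_lt y z -> coded_lt x z.
Proof.
  intros [Hxy [m Hm]] [Hyz [k Hk]]. split; [lia|].
  pose proof (code_rank_bounds x); pose proof (code_rank_bounds z).
  assert (Hy : code_rank y = 2) by lia. assert (Hz : code_rank z = 3) by lia.
  unfold pred_enum in Hm, Hk; rewrite Hy in Hm; rewrite Hz in Hk.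
  destruct (of_nat k) as [i [|j]].
  - exists (to_nat (i, S m)). unfold pred_enum; rewrite Hz, cancel_of_to.
    now subst.
  - subst y. discriminate Hy.
Qed.

Lemma lt_coded_le x y : lt coded_le x y <-> coded_lt x y.
Proof.
  unfold lt, coded_le; split.
  - intros [[E|H] Hne]; [contradiction|exact H].
  - intros H; split; [now right|].
    intros ->; destruct H; lia.
Qed.

Lemma coded_le_partial_order : is_partial_order coded_le.
Proof.
  unfold is_partial_order, coded_le; split; [|split].
  - now left.
  - intros x y [E|[Hxy _]] [E'|[Hyx _]]; auto; lia.
  - intros x y z [<-|Hxy] [<-|Hyz]; auto.
    right; exact (coded_lt_trans x y z Hxy Hyz).
Qed.

Lemma code_rank_lt x y : lt coded_le x y -> code_rank x < code_rank y.
Proof. now intros [H _]%lt_coded_le. Qed.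

Lemma code_lt_rank_pred y :
  2 <= code_rank y -> exists x, lt coded_le x y /\ S (code_rank x) = code_rank y.
Proof.
  intros Hy. pose proof (code_rank_bounds y).
  destruct (Nat.eq_dec (code_rank y) 2) as [H2|H3].
  - exists (below1 y 0). rewrite lt_coded_le, H2.
    split; [split; [cbn; lia|]|reflexivity].
    exists 0. unfold pred_enum; now rewrite H2.
  - assert (H3' : code_rank y = 3) by lia.
    exists (below2 y 0). rewrite lt_coded_le, H3'.
    split; [split; [cbn; lia|]|reflexivity].
    exists (to_nat (0, 0)). unfold pred_enum; now rewrite H3', cancel_of_to.
Qed.

Lemma level1_coded_le x : level1 coded_le x <-> code_rank x = 1.
Proof. exact (level1_iff_rank _ _ _ code_rank_lt code_rank_bounds code_lt_rank_pred x). Qed.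

Lemma level2_coded_le x : level2 coded_le x <-> code_rank x = 2.
Proof. exact (level2_iff_rank _ _ _ code_rank_lt code_rank_bounds code_lt_rank_pred x). Qed.

Lemma level3_coded_le x : level3 coded_le x <-> code_rank x = 3.
Proof. exact (level3_iff_rank _ _ _ code_rank_lt code_rank_bounds code_lt_rank_pred x). Qed.

Lemma coded_le_locally_countable : locally_countable coded_le.
Proof.
  intros y. apply countable_set_of_enum with (g := pred_enum y).
  intros x [_ H]%lt_coded_le. exact H.
Qed.

Lemma coded_le_height : has_height coded_le 3.
Proof.
  apply (has_height_3 _ _ _ code_rank_lt code_rank_bounds code_lt_rank_pred).
  now exists (fun _ => true).
Qed.

Lemma size_continuum_level1_coded_le : size_continuum (level1 coded_le).
Proof.
  exists (fun s n => match n with 0 => false | S m => s m end). split; [|split].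
  - intros s. now apply level1_coded_le.
  - intros s t E. apply functional_extensionality; intro n. exact (equal_f E (S n)).
  - intros x Hx%level1_coded_le. exists (fun n => x (S n)).
    apply functional_extensionality; intros [|n]; [|reflexivity].
    exact (equal_f (with_rank1_id x Hx) 0).
Qed.

Lemma countable_rank1_bounded (S : code -> Prop) :
  (forall x, S x -> code_rank x = 1) -> countable_set S ->
  exists u, code_rank u = 2 /\ forall x, S x -> coded_lt x u.
Proof.
  intros HS HSc.
  destruct (enum_of_countable_set S (inhabits (fun _ => false)) HSc) as [g Hg].
  exists (pack true false g). split; [reflexivity|].
  intros x Hx. split; [rewrite (HS x Hx); cbn; lia|].
  destruct (Hg x Hx) as [n <-]. exists n.
  unfold pred_enum, below1; simpl. rewrite part_pack.
  now apply with_rank1_id, HS.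
Qed.

Lemma rank3_bound_avoiding (Q : list code) (q : code) :
  (forall x, In x Q -> code_rank x < 3) -> code_rank q = 2 -> ~ In q Q ->
  exists r, code_rank r = 3 /\ (forall x, In x Q -> coded_lt x r) /\ ~ coded_le q r.
Proof.
  intros HQ Hq HqQ.
  (* The forced rank-2 point [below2 r 0] differs from [q] at bit 2; the
     padding [nth _ Q false] has rank 1. *)
  set (g i := match i with 0 => fun n => negb (q n) | S i => nth i Q (fun _ => false) end).
  set (r := pack true true g).
  assert (Hr : forall i, below2 r (S i) = nth i Q (fun _ => false)).
  { intros i. unfold below2, r. now rewrite part_pack. }
  exists r. split; [reflexivity|]. split.
  - intros x Hx. split; [now apply HQ|].
    destruct (In_nth Q x (fun _ => false) Hx) as [i [_ Hi]].
    exists (to_nat (S i, 0)). unfold pred_enum. replace (code_rank r) with 3 by reflexivity.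
    now rewrite cancel_of_to, Hr.
  - intros [E|[_ [k Hk]]]; [rewrite E in Hq; discriminate|].
    unfold pred_enum in Hk. replace (code_rank r) with 3 in Hk by reflexivity.
    destruct (of_nat k) as [[|i] [|j]].
    + unfold below2, r in Hk; rewrite part_pack in Hk.
      pose proof (equal_f Hk 2) as H2; simpl in H2. now destruct (q 2).
    + rewrite <- Hk in Hq; discriminate Hq.
    + rewrite Hr in Hk. destruct (Nat.lt_ge_cases i (length Q)) as [Hi|Hi].
      * apply HqQ; rewrite <- Hk; now apply nth_In.
      * rewrite nth_overflow in Hk by assumption. rewrite <- Hk in Hq; discriminate Hq.
    + rewrite <- Hk in Hq; discriminate Hq.
Qed.

Theorem lemma3p2 :
  exists (P : Type) (le : P -> P -> Prop),
    is_partial_order le /\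
    (* (1) *)
    locally_countable le /\ size_continuum (fun _ : P => True) /\
    has_height le 3 /\
    (* (2) *)
    size_continuum (level1 le) /\
    (* (3) *)
    (forall S : P -> Prop,
        (forall x, S x -> level1 le x) -> countable_set S ->
        exists u, level2 le u /\ forall x, S x -> le x u) /\
    (* (4) *)
    (forall (Q : list P) (q : P),
        (forall x, In x Q -> level1 le x \/ level2 le x) ->
        level2 le q -> ~ In q Q ->
        exists r, level3 le r /\ (forall x, In x Q -> le x r) /\ ~ le q r).
Proof.
  exists code, coded_le.
  split; [exact coded_le_partial_order|].
  split; [exact coded_le_locally_countable|].
  split; [exists (fun s => s); split; [|split]; auto; intros a _; now exists a|].
  split; [exact coded_le_height|].
  split; [exact size_continuum_level1_coded_le|].
  split.
  - intros S HS HSc.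
    destruct (countable_rank1_bounded S (fun x Hx => proj1 (level1_coded_le x) (HS x Hx)) HSc)
      as [u [Hu Hbound]].
    exists u. split; [now apply level2_coded_le|].
    intros x Hx; right; now apply Hbound.
  - intros Q q HQ Hq%level2_coded_le HqQ.
    assert (HQ' : forall x, In x Q -> code_rank x < 3).
    { intros x Hx. destruct (HQ x Hx) as [H%level1_coded_le|H%level2_coded_le]; lia. }
    destruct (rank3_bound_avoiding Q q HQ' Hq HqQ) as [r [Hr [Hbound Hq']]].
    exists r. split; [now apply level3_coded_le|]. split; [|exact Hq'].
    intros x Hx; right; now apply Hbound.
Qed.
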